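(* Let $w\in S_k$ and let $\mathbf b=(b_1,\dots,b_{k-1})$ be non-negative integers with $\sum_i b_i=\ell(w)$. Let $F$ be the set of inversions of $w$, for $f=(i,j)\in F$ put $L(f)=\sum_{r=i}^{j-1}v_r$, and $L_w=\prod_{f\in F}L(f)$. Then: (1) the coefficient of $v^{\mathbf b}$ in $R_w$ is non-zero if and only if the coefficient of $v^{\mathbf b}$ in $L_w$ is non-zero; (2) for $1\le s\le t\le k-1$ let $K_{s,t}$ be the number of inversions $(i,j)$ of $w$ with $s\le i<j\le t+1$; then the coefficient of $v^{\mathbf b}$ in $R_w$ is non-zero if and only if $\sum_{i=s}^t b_i\ge K_{s,t}$ for all $1\le s\le t\le k-1$.
   Context: Fix $k\ge 2$. Permutations $u\in S_k$ are written in one-line notation $u=(u(1),\dots,u(k))$. An inversion of $u$ is a pair of positions $(i,j)$ with $i<j$ and $u(i)>u(j)$; $\ell(u)$ is the number of inversions. For $1\le n<m\le k$ let $u\circ(n\,m)$ denote the permutation obtained from $u$ by swapping the entries in positions $n$ and $m$. We say $u'$ covers $u$ if $u'=u\circ(n\,m)$ for some $n<m$ and $\ell(u')=\ell(u)+1$; the weight of this cover is $v_n+v_{n+1}+\dots+v_{m-1}$. For $w\in S_k$, $R_w\in\mathbb Z[v_1,\dots,v_{k-1}]$ is the sum, over all chains $\mathrm{id}=u_0,u_1,\dots,u_{\ell(w)}=w$ in which each $u_{i+1}$ covers $u_i$, of the product of the weights of the covers $u_i\to u_{i+1}$. $v^{\mathbf b}=v_1^{b_1}\cdots v_{k-1}^{b_{k-1}}$.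 *)

From HB Require Import structures.
From mathcomp Require Import all_boot all_order all_algebra all_fingroup.
Set Implicit Arguments. Unset Strict Implicit. Unset Printing Implicit Defensive.
Import GRing.Theory.

(* Polynomials in v_1..v_n with integer coefficients, represented as a
   (non-normalized) formal sum of terms (exponent vector, coefficient).
   Exponent vectors are seq nat of length n; position r (0-indexed)
   is the exponent of v_(r+1). *)
Definition mpoly := seq (seq nat * int).
Definition exp_add (a c : seq nat) : seq nat := [seq x.1 + x.2 | x <- zip a c].
Definition mp_mul (p q : mpoly) : mpoly :=
  [seq (exp_add x.1 y.1, (x.2 * y.2)%R) | x <- p, y <- q].
Definition mp_one (n : nat) : mpoly := [:: (nseq n 0, 1%R)].
Definition mp_var (n r : nat) : mpoly :=
  [:: ([seq nat_of_bool (i == r) | i <- iota 0 n], 1%R)].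
Definition mp_sum (ps : seq mpoly) : mpoly := flatten ps.
Definition mp_prod (n : nat) (ps : seq mpoly) : mpoly := foldr mp_mul (mp_one n) ps.
Definition mp_coef (b : seq nat) (p : mpoly) : int := (\sum_(x <- p | x.1 == b) x.2)%R.

(* v_(a+1) + ... + v_c  (0-indexed variables a .. c-1) *)
Definition interval_form (n a c : nat) : mpoly :=
  mp_sum [seq mp_var n r | r <- iota a (c - a)].

(* Permutations of S_k on positions 'I_k = {0..k-1} (position i+1 of the paper). *)
Definition inv_set (k : nat) (u : 'S_k) : {set 'I_k * 'I_k} :=
  [set p : 'I_k * 'I_k | (p.1 < p.2) && (u p.2 < u p.1)].
Definition len (k : nat) (u : 'S_k) : nat := #|inv_set u|.

(* u' = u o (n m), n < m, with l(u') = l(u)+1;  (tperm n m * u) x = u (tperm n m x) *)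
Definition covers_via (k : nat) (u u' : 'S_k) (p : 'I_k * 'I_k) : bool :=
  [&& p.1 < p.2, u' == (tperm p.1 p.2 * u)%g & len u' == (len u).+1].
Definition covers (k : nat) (u u' : 'S_k) : bool := [exists p, covers_via u u' p].
(* weight v_n + ... + v_(m-1) of the cover (paper's 1-indexed n = p.1+1, m = p.2+1) *)
Definition cover_weight (k : nat) (u u' : 'S_k) : mpoly :=
  mp_sum (map (fun p : 'I_k * 'I_k => interval_form k.-1 (nat_of_ord p.1) (nat_of_ord p.2))
          (enum [pred p : 'I_k * 'I_k | covers_via u u' p])).

Definition chain_weight (k : nat) (c : seq 'S_k) : mpoly :=
  mp_prod k.-1 [seq cover_weight x.1 x.2 | x <- zip (1%g :: c) c].

Definition R_poly (k : nat) (w : 'S_k) : mpoly :=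
  mp_sum [seq chain_weight (tval c) |
           c <- enum [pred c : (len w).-tuple 'S_k |
                        path (@covers k) 1%g c && (last 1%g c == w)]].

Definition L_poly (k : nat) (w : 'S_k) : mpoly :=
  mp_prod k.-1 [seq interval_form k.-1 p.1 p.2 | p : 'I_k * 'I_k <- enum (inv_set w)].

(* K_{s,t} (1-indexed s,t): inversions (i,j) with s <= i < j <= t+1 (1-indexed) *)
Definition Kst (k : nat) (w : 'S_k) (s t : nat) : nat :=
  #|[set p in inv_set w | (s <= p.1.+1) && (p.2.+1 <= t.+1)]|.

From HB Require Import structures.
From mathcomp Require Import all_boot all_order all_algebra all_fingroup.
From mathcomp Require Import zify.
Import GRing.Theory.
Set Implicit Arguments. Unset Strict Implicit. Unset Printing Implicit Defensive.

(* The polynomials R_w and L_w have all their coefficients equal to 1, so only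
   their supports matter, and the support of a product is the Minkowski sum of
   the supports of its factors.
   If v^b occurs in R_w, read along the chain: a cover u -> u o (n m) raises
   the number of inversions of u inside a block of positions by at most one,
   and only when n and m both lie in the block, in which case its weight only
   involves variables of the block; hence sum_(i=s..t) b_i >= K_(s,t).
   Conversely these bounds are Hall's condition for giving each inversion
   (i, j) one of the variables v_i, ..., v_(j-1), v_r being used b_r times;
   for intervals the greedy choice works (the first used variable goes to the
   interval that ends first), so v^b occurs in L_w.
   Finally, by induction on l(w): for an adjacent descent w(p) = w(q) + 1 the
   transposition (p q) is a cover removing exactly the inversion (p, q), whose
   weight is the factor L(p, q) of L_w; so the support of L_w lies in that of
   R_w. *)

Definition mp_supp (p : mpoly) : seq (seq nat) := map fst p.

Definition mp_simple (n : nat) (p : mpoly) : bool :=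
  all (fun x : seq nat * int => (size x.1 == n) && (x.2 == 1%R)) p.

Lemma mp_coef_simple n b p : mp_simple n p -> (mp_coef b p != 0%R) = (b \in mp_supp p).
Proof.
rewrite /mp_coef; elim: p => [|x p IH] /=; first by rewrite big_nil.
case/andP=> /andP[_ /eqP x1] sp; rewrite big_cons in_cons.
have [<-|nb] /= := eqVneq x.1 b; last by rewrite IH // eq_sym (negbTE nb).
have sum_ge0 : (0 <= \sum_(i <- p | i.1 == x.1) i.2)%R.
  rewrite big_seq_cond; apply: Num.Theory.sumr_ge0 => i /andP[ip _].
  by move/allP: sp => /(_ i ip) /andP[_ /eqP ->].
rewrite x1; move: sum_ge0; set S := (\sum_(_ <- _ | _) _)%R; lia.
Qed.

Lemma size_exp_add a c : size (exp_add a c) = minn (size a) (size c).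
Proof. by rewrite size_map size_zip. Qed.

Lemma nth_exp_add a c i : size a = size c ->
  nth 0 (exp_add a c) i = nth 0 a i + nth 0 c i.
Proof.
move=> sac; have [hi|hi] := ltnP i (size a).
  by rewrite (nth_map (0, 0)) ?size_zip -?sac ?minnn // nth_zip.
by rewrite !nth_default ?size_exp_add -?sac ?minnn.
Qed.

Lemma exp_addC a c : size a = size c -> exp_add a c = exp_add c a.
Proof.
move=> sac; apply: (@eq_from_nth _ 0); first by rewrite !size_exp_add minnC.
by move=> i _; rewrite !nth_exp_add // addnC.
Qed.

Lemma exp_addA a c d : size a = size c -> size c = size d ->
  exp_add a (exp_add c d) = exp_add (exp_add a c) d.
Proof.
move=> sac scd; apply: (@eq_from_nth _ 0); first by rewrite !size_exp_add -scd -sac !minnn.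
by move=> i _; rewrite !nth_exp_add ?addnA ?size_exp_add -?scd -?sac ?minnn.
Qed.

Lemma exp_0add n a : size a = n -> exp_add (nseq n 0) a = a.
Proof.
move=> sa; apply: (@eq_from_nth _ 0); first by rewrite size_exp_add size_nseq sa minnn.
by move=> i _; rewrite nth_exp_add ?size_nseq // nth_nseq if_same.
Qed.

Lemma mp_simple_mul n p q : mp_simple n p -> mp_simple n q -> mp_simple n (mp_mul p q).
Proof.
move=> /allP sp /allP sq; apply/allP => z /allpairsP[[x y] [xp yq ->]] /=.
case/andP: (sp x xp) => /eqP sx /eqP ->; case/andP: (sq y yq) => /eqP sy /eqP ->.
by rewrite size_exp_add sx sy minnn mulr1 !eqxx.
Qed.

Lemma mp_simple_sum n ps : all (mp_simple n) ps -> mp_simple n (mp_sum ps).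
Proof.
by move=> /allP sps; apply/allP => x /flattenP[p /sps /allP sp /sp].
Qed.

Lemma mp_simple_prod n ps : all (mp_simple n) ps -> mp_simple n (mp_prod n ps).
Proof.
elim: ps => [|p ps IH] /=; first by rewrite /mp_simple /= size_nseq !eqxx.
by case/andP=> sp sps; apply: mp_simple_mul => //; apply: IH.
Qed.

Lemma mp_simple_var n r : mp_simple n (mp_var n r).
Proof. by rewrite /mp_simple /= size_map size_iota !eqxx. Qed.

Lemma size_mp_supp n p x : mp_simple n p -> x \in mp_supp p -> size x = n.
Proof. by move=> /allP sp /mapP[y yp ->]; case/andP: (sp y yp) => /eqP. Qed.

Lemma size_supp_prod n ps x : all (mp_simple n) ps -> x \in mp_supp (mp_prod n ps) -> size x = n.
Proof. by move=> /mp_simple_prod; apply: size_mp_supp. Qed.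

Lemma mem_supp_mul p q b : b \in mp_supp (mp_mul p q) <->
  exists x y, [/\ x \in mp_supp p, y \in mp_supp q & b = exp_add x y].
Proof.
split=> [|[x [y [/mapP[x' x'p ->] /mapP[y' y'q ->] ->]]]].
  case/mapP=> z /allpairsP[[x y] [xp yq ->]] -> /=.
  by exists x.1, y.1; split => //; apply: map_f.
apply/mapP; exists (exp_add x'.1 y'.1, (x'.2 * y'.2)%R) => //.
by apply/allpairsP; exists (x', y').
Qed.

Lemma mem_supp_sum ps b : b \in mp_supp (mp_sum ps) <-> exists2 p, p \in ps & b \in mp_supp p.
Proof.
rewrite /mp_supp /mp_sum map_flatten; split.
  by case/flatten_mapP=> p pps bp; exists p.
by case=> p pps bp; apply/flatten_mapP; exists p.
Qed.

Lemma mem_supp_prod_cat n l1 l2 b : all (mp_simple n) (l1 ++ l2) ->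
  b \in mp_supp (mp_prod n (l1 ++ l2)) <->
  exists x y, [/\ x \in mp_supp (mp_prod n l1), y \in mp_supp (mp_prod n l2) & b = exp_add x y].
Proof.
elim: l1 b => [|p l1 IH] b /=.
  move=> /mp_simple_prod s2; split=> [bin|[x [y []]]].
    by exists (nseq n 0), b; rewrite mem_head exp_0add // (size_mp_supp s2 bin).
  by rewrite inE => /eqP -> yin ->; rewrite exp_0add // (size_mp_supp s2 yin).
case/andP=> sp s12; move: (s12); rewrite all_cat => /andP[s1 s2].
split.
  case/mem_supp_mul=> x [z [xp /(IH _ s12) [y1 [y2 [y1i y2i ->]]] ->]].
  exists (exp_add x y1), y2; split => //; first by apply/mem_supp_mul; exists x, y1.
  by rewrite exp_addA ?(size_mp_supp sp xp) ?(size_supp_prod s1 y1i) ?(size_supp_prod s2 y2i).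
case=> x [y [/mem_supp_mul [x1 [x2 [x1i x2i ->]]] yi ->]].
apply/mem_supp_mul; exists x1, (exp_add x2 y); split => //.
  by apply/(IH _ s12); exists x2, y.
by rewrite exp_addA ?(size_mp_supp sp x1i) ?(size_supp_prod s1 x2i) ?(size_supp_prod s2 yi).
Qed.

Lemma mem_supp_prod_catCA n s1 s2 s3 b : all (mp_simple n) (s1 ++ s2 ++ s3) ->
  b \in mp_supp (mp_prod n (s1 ++ s2 ++ s3)) ->
  b \in mp_supp (mp_prod n (s2 ++ s1 ++ s3)).
Proof.
move=> s123; have s213 : all (mp_simple n) (s2 ++ s1 ++ s3).
  by move: s123; rewrite !all_cat andbCA.
move: (s123); rewrite !all_cat => /and3P[ss1 ss2 ss3].
case/(mem_supp_prod_cat _ s123) => x [z [xi /mem_supp_prod_cat zi ->]].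
have [|y [z' [yi z'i ->]]] := zi; first by rewrite all_cat ss2.
apply/(mem_supp_prod_cat _ s213); exists y, (exp_add x z'); split => //.
  by apply/mem_supp_prod_cat; [rewrite all_cat ss1 | exists x, z'].
by rewrite !exp_addA ?(exp_addC (a := x)) ?(size_supp_prod ss1 xi)
  ?(size_supp_prod ss2 yi) ?(size_supp_prod ss3 z'i).
Qed.

Lemma mem_supp_prod_perm n l1 l2 b : perm_eq l1 l2 -> all (mp_simple n) l1 ->
  (b \in mp_supp (mp_prod n l1)) = (b \in mp_supp (mp_prod n l2)).
Proof.
have perm_sub s1 s2 : perm_eq s1 s2 -> all (mp_simple n) s1 ->
    b \in mp_supp (mp_prod n s1) -> b \in mp_supp (mp_prod n s2).
  move=> pe s1s b1.
  suff /andP[] : all (mp_simple n) s2 && (b \in mp_supp (mp_prod n s2)) by [].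
  apply: (catCA_perm_ind (P := fun s => all (mp_simple n) s &&
    (b \in mp_supp (mp_prod n s))) _ pe); last by rewrite s1s b1.
  move=> t1 t2 t3 /andP[st bt]; apply/andP; split; last exact: mem_supp_prod_catCA.
  by move: st; rewrite !all_cat andbCA.
move=> pe s1; apply/idP/idP; first exact: perm_sub.
by apply: perm_sub; [rewrite perm_sym | rewrite -(perm_all _ pe)].
Qed.

Definition unit_exp (n r : nat) : seq nat := [seq nat_of_bool (i == r) | i <- iota 0 n].

Definition seg_sum (b : seq nat) (s t : nat) : nat := \sum_(s <= i < t) nth 0 b i.

Lemma size_unit_exp n r : size (unit_exp n r) = n.
Proof. by rewrite size_map size_iota. Qed.

Lemma nth_unit_exp n r i : nth 0 (unit_exp n r) i = (i == r) && (i < n).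
Proof.
have [h|h] := ltnP i n; last by rewrite nth_default ?size_unit_exp // andbF.
by rewrite (nth_map 0) ?size_iota // nth_iota // add0n andbT.
Qed.

Lemma mp_simple_interval_form n a c : mp_simple n (interval_form n a c).
Proof. by apply: mp_simple_sum; apply/allP => p /mapP[r _ ->]; apply: mp_simple_var. Qed.

Lemma mp_simple_interval_forms n (T : Type) (a c : T -> nat) (l : seq T) :
  all (mp_simple n) [seq interval_form n (a p) (c p) | p <- l].
Proof. by elim: l => //= p l ->; rewrite mp_simple_interval_form. Qed.

Lemma mem_supp_interval_form n a c x : x \in mp_supp (interval_form n a c) <->
  exists2 r, a <= r < c & x = unit_exp n r.
Proof.
rewrite /interval_form mem_supp_sum; split.
  case=> p /mapP[r]; rewrite mem_iota => hr ->; rewrite inE => /eqP ->.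
  by exists r => //; lia.
case=> r hr ->; exists (mp_var n r); last by rewrite inE.
by apply/mapP; exists r => //; rewrite mem_iota; lia.
Qed.

Lemma seg_sum_exp_add x y s t : size x = size y ->
  seg_sum (exp_add x y) s t = seg_sum x s t + seg_sum y s t.
Proof. by move=> sxy; rewrite /seg_sum -big_split; apply: eq_bigr => i _; rewrite nth_exp_add. Qed.

Lemma seg_sum_nseq n s t : seg_sum (nseq n 0) s t = 0.
Proof. by rewrite /seg_sum big1 // => i _; rewrite nth_nseq if_same. Qed.

Lemma seg_sum_unit_exp n r s t : r < n -> seg_sum (unit_exp n r) s t = (s <= r < t).
Proof.
move=> rn; rewrite /seg_sum; elim: t => [|t IH]; first by rewrite big_geq //; lia.
have [st|ts] := leqP s t; last by rewrite big_geq //; lia.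
by rewrite big_nat_recr //= IH nth_unit_exp; lia.
Qed.

Lemma seg_sum_cat b s m t : s <= m <= t -> seg_sum b s t = seg_sum b s m + seg_sum b m t.
Proof. by move=> /andP[sm mt]; rewrite /seg_sum (big_cat_nat sm mt). Qed.

Lemma seg_sum_first b r t : r < t -> seg_sum b r t = nth 0 b r + seg_sum b r.+1 t.
Proof. by move=> rt; rewrite /seg_sum big_ltn. Qed.

Lemma seg_sum_eq0 b s t : (forall i, s <= i < t -> nth 0 b i = 0) -> seg_sum b s t = 0.
Proof. by move=> b0; rewrite /seg_sum big_nat_cond big1 // => i /andP[/b0]. Qed.

Lemma sumn_seg_sum b : sumn b = seg_sum b 0 (size b).
Proof. by rewrite sumnE (big_nth 0). Qed.

Section BlockInversions.
Variable k : nat.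
Implicit Types (u w : 'S_k) (x y n m p q : 'I_k).

Lemma ord_neq x y : x != y -> (x == y) = false /\ (x : nat) != y.
Proof. by move=> xy; rewrite val_eqE (negbTE xy). Qed.

Lemma perm_val_neq u x y : x != y -> ((x : nat) != y) /\ ((u x : nat) != u y).
Proof. by move=> xy; rewrite !val_eqE (inj_eq perm_inj). Qed.

Definition in_block (s e : nat) x : bool := s <= x < e.

Definition block_inv u (s e : nat) : nat :=
  \sum_(x | in_block s e x) \sum_(y | in_block s e y) ((x < y) && (u y < u x)).

Lemma block_invE u s e : block_inv u s e =
  #|[set p : 'I_k * 'I_k | [&& in_block s e p.1, in_block s e p.2, p.1 < p.2 & u p.2 < u p.1]]|.
Proof.
rewrite /block_inv pair_big /= -sum1_card big_mkcond [RHS]big_mkcond /=.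
by apply: eq_bigr => p _; rewrite inE; do 2!case: in_block.
Qed.

Lemma len_block_inv u : len u = block_inv u 0 k.
Proof. by rewrite block_invE; apply: eq_card => p; rewrite !inE /in_block !ltn_ord. Qed.

Lemma block_inv1 s e : block_inv 1 s e = 0.
Proof.
rewrite /block_inv big1 // => x _; rewrite big1 // => y _; rewrite !perm1.
by case: ltnP => //= /ltnW; rewrite ltnNge => ->.
Qed.

Lemma in_block_tperm n m s e x : n < m -> s <= n -> m < e ->
  in_block s e (tperm n m x) = in_block s e x.
Proof. by move=> *; case: tpermP => [->|->|//]; rewrite /in_block; lia. Qed.

(* The extra terms on each side count the pairs involving n or m whose
   inversion status changes; all other pairs of the block are merely permuted. *)
Lemma inv_indicator_tperm u n m x y : n < m ->
  ((tperm n m x < tperm n m y) && (u y < u x) : nat)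
  + (((y == m) && ((n < x < m) && (u m < u x)))
     + ((x == n) && ((y == m) && (u m < u n)))
     + ((x == n) && ((n < y < m) && (u y < u n))))
  = ((x < y) && (u y < u x) : nat)
  + (((y == n) && ((n < x < m) && (u n < u x)))
     + ((x == m) && ((y == n) && (u n < u m)))
     + ((x == m) && ((n < y < m) && (u y < u m)))).
Proof.
move=> nm; have mn : (m == n) = false by apply/negbTE; rewrite -val_eqE /=; lia.
have nm' : (n == m) = false by rewrite eq_sym.
case: (tpermP n m x) => [->|->|/eqP/ord_neq[xn ?] /eqP/ord_neq[xm ?]];
case: (tpermP n m y) => [->|->|/eqP/ord_neq[yn ?] /eqP/ord_neq[ym ?]];
rewrite ?eqxx ?mn ?nm' ?xn ?xm ?yn ?ym /=; lia.
Qed.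

Lemma sum_block_pick s e c (g : 'I_k -> bool) : in_block s e c ->
  \sum_(y | in_block s e y) ((y == c) && g y : nat) = g c.
Proof.
by move=> bc; rewrite (bigD1 c) //= eqxx big1 ?addn0 // => y /andP[_ /negbTE ->].
Qed.

Lemma sum2_block_pick_snd s e c (g : 'I_k -> bool) : in_block s e c ->
  \sum_(x | in_block s e x) \sum_(y | in_block s e y) ((y == c) && g x : nat) =
  \sum_(x | in_block s e x) (g x : nat).
Proof. by move=> bc; apply: eq_bigr => x _; apply: (sum_block_pick (fun=> g x)). Qed.

Lemma sum2_block_pick_fst s e c (g : 'I_k -> bool) : in_block s e c ->
  \sum_(x | in_block s e x) \sum_(y | in_block s e y) ((x == c) && g y : nat) =
  \sum_(y | in_block s e y) (g y : nat).
Proof. by move=> bc; rewrite exchange_big; apply: eq_bigr => y _; apply: sum_block_pick. Qed.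

Lemma sum2_block_pick2 s e c d (b : bool) : in_block s e c -> in_block s e d ->
  \sum_(x | in_block s e x) \sum_(y | in_block s e y) ((x == c) && ((y == d) && b) : nat) = b.
Proof.
by move=> bc bd; rewrite (sum2_block_pick_fst (fun y => (y == d) && b)) // sum_block_pick.
Qed.

Lemma block_inv_tperm_raw u n m s e : n < m -> s <= n -> m < e ->
  block_inv (tperm n m * u) s e
  + (\sum_(x | in_block s e x) ((n < x < m) && (u m < u x) : nat) + (u m < u n)
     + \sum_(y | in_block s e y) ((n < y < m) && (u y < u n) : nat))
  = block_inv u s e
  + (\sum_(x | in_block s e x) ((n < x < m) && (u n < u x) : nat) + (u n < u m)
     + \sum_(y | in_block s e y) ((n < y < m) && (u y < u m) : nat)).
Proof.
move=> nm sn me; have bn : in_block s e n by rewrite /in_block; lia.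
have bm : in_block s e m by rewrite /in_block; lia.
pose B := in_block s e.
have sum4 (F G H I : 'I_k -> 'I_k -> nat) :
    \sum_(x | B x) \sum_(y | B y) (F x y + (G x y + H x y + I x y)) =
    \sum_(x | B x) \sum_(y | B y) F x y + (\sum_(x | B x) \sum_(y | B y) G x y +
    \sum_(x | B x) \sum_(y | B y) H x y + \sum_(x | B x) \sum_(y | B y) I x y).
  by rewrite -!big_split; apply: eq_bigr => x _; rewrite -!big_split.
have reindex : block_inv (tperm n m * u) s e = \sum_(x | B x) \sum_(y | B y)
    ((tperm n m x < tperm n m y) && (u y < u x)).
  rewrite /block_inv (reindex_inj (can_inj (tpermK n m))).
  apply: eq_big => [x|x _]; first by rewrite in_block_tperm.
  rewrite (reindex_inj (can_inj (tpermK n m))).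
  apply: eq_big => [y|y _]; first by rewrite in_block_tperm.
  by rewrite !permM !tpermK.
have pointwise : \sum_(x | B x) \sum_(y | B y)
    (((tperm n m x < tperm n m y) && (u y < u x) : nat)
    + (((y == m) && ((n < x < m) && (u m < u x)))
       + ((x == n) && ((y == m) && (u m < u n)))
       + ((x == n) && ((n < y < m) && (u y < u n)))))
  = \sum_(x | B x) \sum_(y | B y) (((x < y) && (u y < u x) : nat)
    + (((y == n) && ((n < x < m) && (u n < u x)))
       + ((x == m) && ((y == n) && (u n < u m)))
       + ((x == m) && ((n < y < m) && (u y < u m))))).
  by apply: eq_bigr => x _; apply: eq_bigr => y _; apply: inv_indicator_tperm.
rewrite !sum4 in pointwise; rewrite reindex; move: pointwise.
by rewrite (@sum2_block_pick2 _ _ n m) // (@sum2_block_pick2 _ _ m n) //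
  (@sum2_block_pick_snd _ _ m) // (@sum2_block_pick_snd _ _ n) //
  (@sum2_block_pick_fst _ _ n) // (@sum2_block_pick_fst _ _ m).
Qed.

Definition between_count u n m (s e : nat) : nat :=
  \sum_(x | in_block s e x) ((n < x < m) && (u n < u x) && (u x < u m) : nat).

Lemma block_inv_tperm u n m s e : n < m -> s <= n -> m < e -> u n < u m ->
  block_inv (tperm n m * u) s e = block_inv u s e + 1 + 2 * between_count u n m s e.
Proof.
move=> nm sn me unm; have := block_inv_tperm_raw u nm sn me.
have -> : (u m < u n) = false by lia.
rewrite unm.
have split_gap : \sum_(x | in_block s e x) ((n < x < m) && (u m < u x) : nat)
       + \sum_(y | in_block s e y) ((n < y < m) && (u y < u n) : nat)
       + 2 * between_count u n m s e
     = \sum_(x | in_block s e x) ((n < x < m) && (u n < u x) : nat)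
       + \sum_(y | in_block s e y) ((n < y < m) && (u y < u m) : nat).
  rewrite /between_count big_distrr -!big_split /=; apply: eq_bigr => x _.
  have [hx|] /= := boolP (n < x < m); last by rewrite !muln0.
  have /(perm_val_neq u)[_ ?] : x != n by apply: contraTneq hx => ->; lia.
  have /(perm_val_neq u)[_ ?] : x != m by apply: contraTneq hx => ->; lia.
  lia.
lia.
Qed.

Lemma between_count_eq0 u n m s e :
  (forall x, n < x < m -> (u x < u n) || (u m < u x)) -> between_count u n m s e = 0.
Proof.
move=> gap; apply/eqP; rewrite sum_nat_eq0; apply/forallP => x; apply/implyP => _.
by have [/gap|] := boolP (n < x < m); lia.
Qed.

Lemma covers_viaP u u' (p : 'I_k * 'I_k) : covers_via u u' p ->
  [/\ p.1 < p.2, u' = (tperm p.1 p.2 * u)%g, u p.1 < u p.2 &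
      forall x, p.1 < x < p.2 -> (u x < u p.1) || (u p.2 < u x)].
Proof.
case/and3P=> h12 /eqP -> /eqP hl.
have len_tperm (v : 'S_k) : v p.1 < v p.2 ->
    len (tperm p.1 p.2 * v) = len v + 1 + 2 * between_count v p.1 p.2 0 k.
  by move=> hv; rewrite !len_block_inv block_inv_tperm.
have hlt : u p.1 < u p.2.
  have /(perm_val_neq u)[_] : p.1 != p.2 by rewrite -val_eqE neq_ltn h12.
  case: ltngtP => // hgt _; pose v := (tperm p.1 p.2 * u)%g.
  have uv : u = (tperm p.1 p.2 * v)%g by rewrite /v mulgA tperm2 mul1g.
  have := len_tperm v; rewrite -uv hl /v !permM tpermL tpermR => /(_ hgt); lia.
split => // x hx; move: (len_tperm u hlt); rewrite hl => E.
have /eqP : between_count u p.1 p.2 0 k = 0 by lia.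
rewrite /between_count sum_nat_eq0 => /forallP /(_ x); rewrite /in_block ltn_ord hx /=.
have /(perm_val_neq u)[_ ?] : x != p.1 by apply: contraTneq hx => ->; lia.
have /(perm_val_neq u)[_ ?] : x != p.2 by apply: contraTneq hx => ->; lia.
lia.
Qed.

Lemma block_inv_cover u u' (p : 'I_k * 'I_k) s e : covers_via u u' p ->
  block_inv u' s e <= block_inv u s e + ((s <= p.1) && (p.2 < e)).
Proof.
move=> /covers_viaP[h12 -> hlt gap].
have [/andP[sn me]|out] := boolP ((s <= p.1) && (p.2 < e)).
  by rewrite block_inv_tperm // between_count_eq0 //; lia.
rewrite addn0; apply: leq_sum => x bx; apply: leq_sum => y byy; rewrite !permM.
move: bx byy out (gap x) (gap y); rewrite /in_block.
case: (tpermP p.1 p.2 x) => [->|->|/eqP/(perm_val_neq u)[? ?] /eqP/(perm_val_neq u)[? ?]];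
case: (tpermP p.1 p.2 y) => [->|->|/eqP/(perm_val_neq u)[? ?] /eqP/(perm_val_neq u)[? ?]];
lia.
Qed.

Lemma inv_set_adj_descent w p q : p < q -> (w p : nat) = (w q).+1 ->
  inv_set w = (p, q) |: inv_set (tperm p q * w)%g /\
  (p, q) \notin inv_set (tperm p q * w)%g.
Proof.
move=> pq wpq; split; last by rewrite inE /= !permM tpermL tpermR; lia.
apply/setP => [[x y]]; rewrite !inE /= !permM xpair_eqE -!val_eqE /=.
case: (tpermP p q x) => [->|->|/eqP/(perm_val_neq w)[? ?] /eqP/(perm_val_neq w)[? ?]];
case: (tpermP p q y) => [->|->|/eqP/(perm_val_neq w)[? ?] /eqP/(perm_val_neq w)[? ?]];
lia.
Qed.

Lemma covers_adj_descent w p q : p < q -> (w p : nat) = (w q).+1 ->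
  covers_via (tperm p q * w)%g w (p, q) /\ len w = (len (tperm p q * w)%g).+1.
Proof.
move=> pq wpq; have [E N] := inv_set_adj_descent pq wpq.
have L : len w = (len (tperm p q * w)%g).+1 by rewrite /len E cardsU1 N.
by split => //; apply/and3P; split; rewrite /= ?L ?mulgA ?tperm2 ?mul1g.
Qed.

Lemma exists_adj_descent w : 0 < len w -> exists p q, p < q /\ (w p : nat) = (w q).+1.
Proof.
rewrite /len card_gt0 => /set0Pn[[i j]]; rewrite inE /= => /andP[ij wji].
move: {2}(w i - w j) (leqnn (w i - w j)) => d; elim: d i j ij wji => [|d IH] i j ij wji gap.
  lia.
have [adj|] := eqVneq (w i : nat) (w j).+1; first by exists i, j.
move=> not_adj; have wj1 : (w j).+1 < k by have := ltn_ord (w i); lia.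
pose z := (w^-1)%g (Ordinal wj1); have wz : (w z : nat) = (w j).+1 by rewrite permKV.
case: (ltngtP z j) => [zj|jz|/val_inj zj]; first by exists z, j.
- by apply: (IH i z); lia.
- by move: wz; rewrite zj; lia.
Qed.

Lemma len_eq0 w : len w = 0 -> w = 1%g.
Proof.
move=> l0; have noinv : inv_set w = set0 by apply/eqP; rewrite -cards_eq0 -/(len w) l0.
have incr x y : x < y -> w x < w y.
  move=> xy; case: ltngtP => // [wyx|/val_inj/perm_inj yx]; last by move: xy; rewrite yx ltnn.
  have : (x, y) \in inv_set w by rewrite inE /= xy wyx.
  by rewrite noinv inE.
apply/permP => x; rewrite perm1; move: {2}(x : nat) (erefl (x : nat)) => i.
elim/ltn_ind: i x => i IH x xi; have fixed y : y < x -> w y = y.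
  by move=> yx; apply: (IH y); rewrite -?xi.
case: (ltngtP (w x) x) => [wxx|xwx|/val_inj //].
  by move: (fixed _ wxx) => /perm_inj wx; move: wxx; rewrite wx ltnn.
have [z wz] : exists z, w z = x by exists ((w^-1)%g x); rewrite permKV.
case: (ltngtP z x) => [zx|xz|/val_inj zx].
- by have := fixed _ zx; rewrite wz => xz; move: zx; rewrite xz ltnn.
- by move: (incr _ _ xz); rewrite wz; lia.
- by rewrite -[in w x]zx.
Qed.

End BlockInversions.

Section Chains.
Variable k : nat.
Local Notation n := k.-1.
Implicit Types (u v w : 'S_k) (c : seq 'S_k).

Lemma mp_simple_cover_weight u v : mp_simple n (cover_weight u v).
Proof.
by apply: mp_simple_sum; apply/allP => p /mapP[q _ ->]; apply: mp_simple_interval_form.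
Qed.

Lemma mem_supp_cover_weight u v x : x \in mp_supp (cover_weight u v) <->
  exists p : 'I_k * 'I_k, covers_via u v p /\ x \in mp_supp (interval_form n p.1 p.2).
Proof.
rewrite /cover_weight mem_supp_sum; split.
  by case=> q /mapP[p]; rewrite mem_enum => hp -> hx; exists p.
case=> p [hp hx]; exists (interval_form n p.1 p.2) => //.
by apply/mapP; exists p; rewrite ?mem_enum.
Qed.

Definition cover_weights u c : seq mpoly := [seq cover_weight x.1 x.2 | x <- zip (u :: c) c].

Lemma mp_simple_cover_weights u c : all (mp_simple n) (cover_weights u c).
Proof. by apply/allP => p /mapP[q _ ->]; apply: mp_simple_cover_weight. Qed.

Lemma mp_simple_R w : mp_simple n (R_poly w).
Proof.
apply: mp_simple_sum; apply/allP => q /mapP[c _ ->].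
exact/mp_simple_prod/mp_simple_cover_weights.
Qed.

Lemma block_inv_chain u c b s e : e <= k ->
  b \in mp_supp (mp_prod n (cover_weights u c)) ->
  block_inv (last u c) s e <= block_inv u s e + seg_sum b s e.-1.
Proof.
move=> ek; elim: c u b => [|v c IH] u b /=.
  by rewrite inE => /eqP ->; rewrite seg_sum_nseq addn0.
case/mem_supp_mul=> x [y [hx hy ->]].
have sy := size_supp_prod (mp_simple_cover_weights v c) hy.
rewrite seg_sum_exp_add ?(size_mp_supp (mp_simple_cover_weight u v) hx) //.
case/mem_supp_cover_weight: hx => p [hp /mem_supp_interval_form[r hr ->]].
have := IH v y hy; have := block_inv_cover s e hp.
by rewrite seg_sum_unit_exp; have := ltn_ord p.2; lia.
Qed.

Lemma mem_supp_R w b : b \in mp_supp (R_poly w) <->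
  exists c, [/\ size c = len w, path (@covers k) 1%g c, last 1%g c = w
              & b \in mp_supp (chain_weight c)].
Proof.
rewrite /R_poly mem_supp_sum; split.
  case=> q /mapP[c]; rewrite mem_enum => /andP[hp /eqP hl] -> hb.
  by exists c; rewrite size_tuple.
case=> c [sz hp hl hb]; have sz' : size c == len w by apply/eqP.
exists (chain_weight (Tuple sz')) => //.
by apply/mapP; exists (Tuple sz') => //; rewrite mem_enum; apply/andP; split => //; apply/eqP.
Qed.

Lemma mem_supp_chain_weight_rcons c v x y :
  x \in mp_supp (cover_weight (last 1%g c) v) -> y \in mp_supp (chain_weight c) ->
  exp_add x y \in mp_supp (chain_weight (rcons c v)).
Proof.
move=> hx hy; have zip_rcons (a : 'S_k) d :
    zip (a :: rcons d v) (rcons d v) = rcons (zip (a :: d) d) (last a d, v).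
  by elim: d a => [|z d IH] a //=; rewrite IH.
rewrite /chain_weight zip_rcons map_rcons.
rewrite (@mem_supp_prod_perm _ _ (cover_weight (last 1%g c) v :: cover_weights 1 c))
  ?perm_rcons ?all_rcons ?mp_simple_cover_weight ?mp_simple_cover_weights //.
by apply/mem_supp_mul; exists x, y.
Qed.

Lemma mp_simple_L w : mp_simple n (L_poly w).
Proof. exact/mp_simple_prod/mp_simple_interval_forms. Qed.

Lemma supp_L_sub_R w : {subset mp_supp (L_poly w) <= mp_supp (R_poly w)}.
Proof.
move: {2}(len w) (erefl (len w)) => N; elim: N w => [|N IH] w hl b.
  have e0 : enum (inv_set w) = [::] by apply/eqP; rewrite -size_eq0 -cardE -/(len w) hl.
  rewrite /L_poly e0 inE => /eqP ->; apply/mem_supp_R; exists [::].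
  by rewrite /= hl (len_eq0 hl) inE.
have [|p [q [pq wpq]]] := @exists_adj_descent k w; first by rewrite hl.
set u := (tperm p q * w)%g; have [hc hlen] := covers_adj_descent pq wpq.
have [E nin] := inv_set_adj_descent pq wpq; rewrite -/u in hc hlen E nin.
have pe : perm_eq (enum (inv_set w)) ((p, q) :: enum (inv_set u)).
  apply: uniq_perm; rewrite /= ?mem_enum ?nin ?enum_uniq // => z.
  by rewrite mem_enum E in_setU1 in_cons mem_enum.
rewrite /L_poly (mem_supp_prod_perm _ (perm_map _ pe) (mp_simple_interval_forms _ _ _ _)) /=.
case/mem_supp_mul=> x [y [hx hy ->]].
have /mem_supp_R[c [sz hp hlc hy']] : y \in mp_supp (R_poly u) by apply: IH hy; lia.
apply/mem_supp_R; exists (rcons c w); split.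
- by rewrite size_rcons sz hlen.
- by rewrite rcons_path hp /= hlc; apply/existsP; exists (p, q).
- by rewrite last_rcons.
apply: mem_supp_chain_weight_rcons => //; apply/mem_supp_cover_weight.
by exists (p, q); rewrite hlc.
Qed.

End Chains.

(* An interval (a, c) stands for the linear form v_(a+1) + ... + v_c. *)
Definition count_within (M : seq (nat * nat)) (s t : nat) : nat :=
  count (fun iv : nat * nat => (s <= iv.1) && (iv.2 <= t)) M.

Definition hall_cond (n : nat) (M : seq (nat * nat)) (b : seq nat) : Prop :=
  forall s t, s <= t <= n -> count_within M s t <= seg_sum b s t.

Definition dec_nth (r : nat) (b : seq nat) : seq nat := set_nth 0 b r (nth 0 b r).-1.

Lemma sub_in_count (T : eqType) (a1 a2 : pred T) (s : seq T) :
  {in s, subpred a1 a2} -> count a1 s <= count a2 s.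
Proof.
move=> sub; have -> : count a1 s = count (predI a2 a1) s.
  by apply: eq_in_count => x xs /=; case a1x: (a1 x); rewrite ?andbF ?(sub x xs a1x).
by apply: sub_count => x /andP[].
Qed.

Lemma size_dec_nth r b : r < size b -> size (dec_nth r b) = size b.
Proof. by move=> rb; rewrite size_set_nth; lia. Qed.

Lemma exp_add_unit_dec_nth r b : r < size b -> nth 0 b r != 0 ->
  b = exp_add (unit_exp (size b) r) (dec_nth r b).
Proof.
move=> rb br; apply: (@eq_from_nth _ 0).
  by rewrite size_exp_add size_unit_exp size_dec_nth // minnn.
move=> i _; rewrite nth_exp_add ?size_unit_exp ?size_dec_nth // nth_unit_exp nth_set_nth /=.
by case: eqVneq => [->|]; rewrite ?rb /=; lia.
Qed.

Lemma seg_sum_dec_nth r b s t : r < size b -> nth 0 b r != 0 ->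
  seg_sum b s t = (s <= r < t) + seg_sum (dec_nth r b) s t.
Proof.
move=> rb br; rewrite {1}(exp_add_unit_dec_nth rb br) seg_sum_exp_add ?seg_sum_unit_exp //.
by rewrite size_unit_exp size_dec_nth.
Qed.

Section HallStep.
Variables (n : nat) (M : seq (nat * nat)) (b : seq nat).
Hypotheses (M_valid : all (fun iv : nat * nat => (iv.1 < iv.2) && (iv.2 <= n)) M)
  (size_b : size b = n) (sum_b : sumn b = size M) (hall : hall_cond n M b)
  (M_nonempty : 0 < size M).

Local Notation r := (find (fun x => x != 0) b).

Lemma first_nonzeroP : r < n /\ nth 0 b r != 0.
Proof.
have hb : has (fun x => x != 0) b.
  have : sumn b != 0 by rewrite sum_b -lt0n.
  by rewrite sumnE sum_nat_seq_neq0.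
by split; [rewrite -size_b -has_find | exact: (nth_find 0 hb)].
Qed.

Lemma seg_sum_before_first s t : t <= r -> seg_sum b s t = 0.
Proof.
move=> tr; apply: seg_sum_eq0 => i si.
have ir : i < r by lia.
by have /negbFE/eqP := @before_find _ 0 (fun x => x != 0) b i ir.
Qed.

Lemma ends_after_first (J : nat * nat) : J \in M -> r < J.2.
Proof.
move=> JM; have [rn _] := first_nonzeroP.
have r0n : 0 <= r <= n by rewrite leq0n ltnW.
have := @hall 0 r r0n; rewrite seg_sum_before_first // leqn0.
by rewrite eqn0Ngt -has_count => /hasPn/(_ J JM) /=; lia.
Qed.

Lemma exists_cover_first : has (fun iv : nat * nat => iv.1 <= r < iv.2) M.
Proof.
apply/contraT => /hasPn no_cover; have [rn br] := first_nonzeroP.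
have all_after : count_within M r.+1 n = size M.
  apply/eqP; rewrite -all_count; apply/allP => J JM /=.
  have := no_cover J JM; have := ends_after_first JM.
  by move/allP: M_valid => /(_ J JM) /=; lia.
have split_b : sumn b = nth 0 b r + seg_sum b r.+1 n.
  rewrite sumn_seg_sum size_b (@seg_sum_cat b 0 r n) ?leq0n ?(ltnW rn) //.
  by rewrite seg_sum_before_first // (seg_sum_first _ rn).
have rn' : r.+1 <= n <= n by rewrite rn leqnn.
by have := @hall r.+1 n rn'; rewrite all_after -sum_b split_b; lia.
Qed.

Lemma exists_min_cover : exists J : nat * nat, [/\ J \in M, J.1 <= r < J.2 &
  forall J' : nat * nat, J' \in M -> J'.1 <= r < J'.2 -> J.2 <= J'.2].
Proof.
pose P e := has (fun iv : nat * nat => (iv.1 <= r < iv.2) && (iv.2 == e)) M.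
have exP : exists e, P e.
  by case/hasP: exists_cover_first => J JM hJ; exists J.2; apply/hasP; exists J; rewrite ?hJ ?eqxx.
case: (ex_minnP exP) => e /hasP[J JM /andP[hJ /eqP eJ]] emin.
exists J; split => // J' J'M hJ'; rewrite eJ; apply: emin.
by apply/hasP; exists J'; rewrite ?hJ' ?eqxx.
Qed.

(* Give v_(r+1), the first variable of b, to the interval J containing it that
   ends first. A block [s, t] that loses v_(r+1) but keeps J either ends before
   J, and then its intervals all start after r, or starts after J.1, and then
   the bound for the block [0, t], which also contains J, applies. *)
Lemma hall_cond_rem (J : nat * nat) : J \in M -> J.1 <= r < J.2 ->
  (forall J' : nat * nat, J' \in M -> J'.1 <= r < J'.2 -> J.2 <= J'.2) ->
  hall_cond n (rem J M) (dec_nth r b).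
Proof.
move=> JM J_cover J_min s t /andP[st tn]; have [rn br] := first_nonzeroP.
have rb : r < size b by rewrite size_b.
have bsum := seg_sum_dec_nth s t rb br.
have cnt_rem : count_within (rem J M) s t =
    count_within M s t - ((s <= J.1) && (J.2 <= t)) by rewrite /count_within count_rem JM.
have st_n : s <= t <= n by rewrite st tn.
have hst := @hall s t st_n.
have [hr|] := boolP (s <= r < t); last by lia.
have [|J_out] := boolP ((s <= J.1) && (J.2 <= t)); first by lia.
have before_s : seg_sum b 0 s = 0 by apply: seg_sum_before_first; lia.
have [tJ|Jt] := ltnP t J.2.
  have sub : count_within M s t <= count_within M r.+1 t.
    apply: sub_in_count => -[a c] acM /andP[/= sa ct]; rewrite /= ct andbT.
    by have := J_min (a, c) acM; have := ends_after_first acM; rewrite /=; lia.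
  have srt : s <= r <= t by lia.
  have rt : r < t by lia.
  have r_split : seg_sum b s t = nth 0 b r + seg_sum b r.+1 t.
    by rewrite (seg_sum_cat _ srt) seg_sum_before_first // (seg_sum_first _ rt).
  have rtn : r.+1 <= t <= n by rewrite rt tn.
  by have := @hall r.+1 t rtn; lia.
have J_extra : count_within M s t < count_within M 0 t.
  rewrite /count_within !(seq.permP (perm_to_rem JM)) /= (negbTE J_out) Jt /=.
  by rewrite ltnS; apply: sub_count => J' /andP[_].
have t0 : 0 <= t <= n by rewrite leq0n tn.
have := @hall 0 t t0; rewrite (@seg_sum_cat b 0 s t) ?before_s ?st //; lia.
Qed.

Lemma hall_step : exists (J : nat * nat) i,
  [/\ J \in M, J.1 <= i < J.2, i < n, nth 0 b i != 0 & hall_cond n (rem J M) (dec_nth i b)].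
Proof.
have [J [JM J_cover J_min]] := exists_min_cover; have [rn br] := first_nonzeroP.
by exists J, r; split => //; apply: hall_cond_rem.
Qed.

End HallStep.

Theorem hall_supp_prod_interval_forms n (M : seq (nat * nat)) b :
  all (fun iv : nat * nat => (iv.1 < iv.2) && (iv.2 <= n)) M -> size b = n ->
  sumn b = size M -> hall_cond n M b ->
  b \in mp_supp (mp_prod n [seq interval_form n iv.1 iv.2 | iv : nat * nat <- M]).
Proof.
move sizeM: (size M) => N; elim: N M b sizeM => [|N IH] M b sizeM valid size_b sum_b hall.
  move/eqP: sizeM; rewrite size_eq0 => /eqP -> /=; rewrite inE.
  by move/eqP/natnseq0P: sum_b; rewrite size_b => ->.
have [|J [r [JM J_cover rn br hall']]] := hall_step valid size_b (etrans sum_b (esym sizeM)) hall.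
  by rewrite sizeM.
rewrite (mem_supp_prod_perm _ (perm_map _ (perm_to_rem JM)) (mp_simple_interval_forms _ _ _ _)) /=.
have rb : r < size b by rewrite size_b.
apply/mem_supp_mul; exists (unit_exp n r), (dec_nth r b); split.
- by apply/mem_supp_interval_form; exists r.
- apply: IH hall'; rewrite ?size_dec_nth // ?size_rem ?sizeM //.
    by apply/allP => iv /mem_rem ivM; move/allP: valid; apply.
  by rewrite sumn_set_nth0; move: br; rewrite -lt0n; lia.
by rewrite -size_b; apply: exp_add_unit_dec_nth.
Qed.

Section InversionBounds.
Variable k : nat.
Implicit Types (w : 'S_k) (b : seq nat).

Definition Kst_bound w b : Prop := forall s t : nat, 1 <= s -> s <= t -> t <= k.-1 ->
  Kst w s t <= \sum_(s <= i < t.+1) nth 0 b i.-1.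

Lemma sum_pred_shift b s t : \sum_(s.+1 <= i < t.+1) nth 0 b i.-1 = seg_sum b s t.
Proof. by rewrite big_add1. Qed.

Lemma Kst_block_inv w s t : t < k -> Kst w s.+1 t = block_inv w s t.+1.
Proof.
move=> tk; rewrite block_invE; apply: eq_card => -[x y]; rewrite !inE /in_block /=.
by have := ltn_ord x; have := ltn_ord y; lia.
Qed.

Definition inv_intervals w : seq (nat * nat) :=
  [seq (nat_of_ord p.1, nat_of_ord p.2) | p : 'I_k * 'I_k <- enum (inv_set w)].

Lemma count_within_inv_intervals w s t : count_within (inv_intervals w) s t = Kst w s.+1 t.
Proof.
rewrite /count_within count_map -sum1_count big_enum_cond /= sum1dep_card /Kst.
by apply: eq_card => p; rewrite !inE /=; lia.
Qed.

Lemma supp_R_Kst_bound w b : b \in mp_supp (R_poly w) -> Kst_bound w b.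
Proof.
case/mem_supp_R=> c [_ _ hl hc] [//|s] t _ st tk; rewrite sum_pred_shift Kst_block_inv; last by lia.
have := block_inv_chain s (_ : t.+1 <= k) hc; rewrite hl block_inv1; apply; lia.
Qed.

Lemma Kst_bound_supp_L w b : size b = k.-1 -> sumn b = len w -> Kst_bound w b ->
  b \in mp_supp (L_poly w).
Proof.
move=> size_b sum_b bound.
have -> : L_poly w = mp_prod k.-1
    [seq interval_form k.-1 iv.1 iv.2 | iv : nat * nat <- inv_intervals w].
  by rewrite /L_poly -map_comp.
apply: hall_supp_prod_interval_forms => //.
- apply/allP => -[a c] /mapP[[x y] + [-> ->]] /=; rewrite mem_enum inE /=.
  by have := ltn_ord y; lia.
- by rewrite sum_b size_map -cardE.
move=> s t /andP[st tn]; rewrite count_within_inv_intervals -sum_pred_shift.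
case: (ltngtP s t) st => // [lt_st|<-] _; first by apply: bound; lia.
by rewrite /Kst big_geq // leqn0 cards_eq0; apply/eqP/setP => -[x y]; rewrite !inE /=; lia.
Qed.

End InversionBounds.

Theorem mainTheorem10 (k : nat) (hk : 2 <= k) (w : 'S_k) (b : seq nat)
  (hb : size b = k.-1) (hsum : sumn b = len w) :
  ((mp_coef b (R_poly w) != 0%R) <-> (mp_coef b (L_poly w) != 0%R)) /\
  ((mp_coef b (R_poly w) != 0%R) <->
     (forall s t : nat, 1 <= s -> s <= t -> t <= k.-1 ->
        Kst w s t <= \sum_(s <= i < t.+1) nth 0 b i.-1)).
Proof.
rewrite (mp_coef_simple _ (mp_simple_R w)) (mp_coef_simple _ (mp_simple_L w)).
have R_bound := @supp_R_Kst_bound k w b; have bound_L := Kst_bound_supp_L hb hsum.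
have L_R := @supp_L_sub_R k w b.
by split; split; [move/R_bound/bound_L | move/L_R | move/R_bound | move/bound_L/L_R].
Qed.
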